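(* For every natural number $n$ and all $x,y,z\in\mathbb{R}$ such that $\sin\frac{x+y+2z}{2}$, $\sin\frac{x+y-2z}{2}$, $\sin\frac{x-y+2z}{2}$, $\sin\frac{x-y-2z}{2}$ are all nonzero, $$\Upsilon_n(x,y,z):=\sum_{j=0}^{n}\sin((j+1)x)\sin((j+1)y)\sin((2n-2j+3)z)$$ equals $$\frac{\cos\frac{x-y+(8+4n)z}{2}}{8\sin\frac{x-y-2z}{2}}-\frac{\cos\frac{(2n+3)(x-y)+4z}{2}}{8\sin\frac{x-y-2z}{2}}+\frac{\cos\frac{(2n+3)(x-y)-4z}{2}}{8\sin\frac{x-y+2z}{2}}-\frac{\cos\frac{x-y-(8+4n)z}{2}}{8\sin\frac{x-y+2z}{2}}$$ $$+\frac{\cos\frac{(2n+3)(x+y)+4z}{2}}{8\sin\frac{x+y-2z}{2}}-\frac{\cos\frac{x+y+(8+4n)z}{2}}{8\sin\frac{x+y-2z}{2}}+\frac{\cos\frac{x+y-(8+4n)z}{2}}{8\sin\frac{x+y+2z}{2}}-\frac{\cos\frac{(2n+3)(x+y)-4z}{2}}{8\sin\frac{x+y+2z}{2}}.$$ *)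

From Stdlib Require Import Reals.
Open Scope R_scope.

Definition Upsilon (n : nat) (x y z : R) : R :=
  sum_f_R0 (fun j => sin ((INR j + 1) * x) * sin ((INR j + 1) * y)
                     * sin ((2 * INR n - 2 * INR j + 3) * z)) n.

(* Product-to-sum turns each summand of [Upsilon] into four sines whose
   arguments run through arithmetic progressions in [j] with differences
   [x - y -+ 2 z] and [x + y -+ 2 z].  Multiplying a progression of sines by
   [2 sin (d / 2)] makes it telescope into a difference of two cosines, which
   gives the eight terms of the closed form. *)

From Stdlib Require Import Reals.
Open Scope R_scope.

Lemma two_sin_half_mul_sin (d t : R) :
  2 * sin (d / 2) * sin t = cos (t - d / 2) - cos (t + d / 2).
Proof. rewrite cos_minus, cos_plus; ring. Qed.

Lemma sum_sin_progression_mul (a d : R) (n : nat) :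
  2 * sin (d / 2) * sum_f_R0 (fun j => sin (a + INR j * d)) n
  = cos (a - d / 2) - cos (a + INR n * d + d / 2).
Proof.
  induction n as [|n IH]; cbn [sum_f_R0].
  - rewrite two_sin_half_mul_sin, INR_0, Rmult_0_l, Rplus_0_r; reflexivity.
  - rewrite Rmult_plus_distr_l, IH, two_sin_half_mul_sin, S_INR.
    replace (a + (INR n + 1) * d - d / 2) with (a + INR n * d + d / 2) by field.
    ring.
Qed.

Lemma sum_sin_progression (a d : R) (n : nat) : sin (d / 2) <> 0 ->
  sum_f_R0 (fun j => sin (a + INR j * d)) n
  = (cos (a - d / 2) - cos (a + INR n * d + d / 2)) / (2 * sin (d / 2)).
Proof. intro Hd. rewrite <- sum_sin_progression_mul. field. exact Hd. Qed.

Lemma sin_mul_sin_mul_sin (a b c : R) :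
  sin a * sin b * sin c =
  / 4 * ((sin (c + (a - b)) - sin ((a - b) - c))
         - (sin (c + (a + b)) - sin ((a + b) - c))).
Proof. repeat rewrite ?sin_plus, ?sin_minus, ?cos_plus, ?cos_minus. field. Qed.

Definition sin_pair_sum (n : nat) (w z : R) : R :=
  sum_f_R0 (fun j => sin ((2 * INR n - 2 * INR j + 3) * z + (INR j + 1) * w)
                     - sin ((INR j + 1) * w - (2 * INR n - 2 * INR j + 3) * z)) n.

Lemma Upsilon_sin_pair_sum (n : nat) (x y z : R) :
  Upsilon n x y z = / 4 * (sin_pair_sum n (x - y) z - sin_pair_sum n (x + y) z).
Proof.
  unfold Upsilon, sin_pair_sum.
  rewrite <- minus_sum, scal_sum.
  apply sum_eq; intros j _.
  rewrite sin_mul_sin_mul_sin, <- (Rmult_minus_distr_l (INR j + 1) x y),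
    <- Rmult_plus_distr_l.
  ring.
Qed.

Lemma sin_pair_sum_closed (n : nat) (w z : R) :
  sin ((w - 2 * z) / 2) <> 0 -> sin ((w + 2 * z) / 2) <> 0 ->
  sin_pair_sum n w z =
    (cos ((w + (8 + 4 * INR n) * z) / 2) - cos (((2 * INR n + 3) * w + 4 * z) / 2))
      / (2 * sin ((w - 2 * z) / 2))
  - (cos ((w - (8 + 4 * INR n) * z) / 2) - cos (((2 * INR n + 3) * w - 4 * z) / 2))
      / (2 * sin ((w + 2 * z) / 2)).
Proof.
  intros Hm Hp. unfold sin_pair_sum. rewrite minus_sum.
  rewrite (sum_eq (fun j => sin ((2 * INR n - 2 * INR j + 3) * z + (INR j + 1) * w))
                  (fun j => sin ((2 * INR n + 3) * z + w + INR j * (w - 2 * z))))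
    by (intros j _; f_equal; ring).
  rewrite (sum_eq (fun j => sin ((INR j + 1) * w - (2 * INR n - 2 * INR j + 3) * z))
                  (fun j => sin (w - (2 * INR n + 3) * z + INR j * (w + 2 * z))))
    by (intros j _; f_equal; ring).
  rewrite !sum_sin_progression by assumption.
  replace ((2 * INR n + 3) * z + w - (w - 2 * z) / 2)
    with ((w + (8 + 4 * INR n) * z) / 2) by field.
  replace ((2 * INR n + 3) * z + w + INR n * (w - 2 * z) + (w - 2 * z) / 2)
    with (((2 * INR n + 3) * w + 4 * z) / 2) by field.
  replace (w - (2 * INR n + 3) * z - (w + 2 * z) / 2)
    with ((w - (8 + 4 * INR n) * z) / 2) by field.
  replace (w - (2 * INR n + 3) * z + INR n * (w + 2 * z) + (w + 2 * z) / 2)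
    with (((2 * INR n + 3) * w - 4 * z) / 2) by field.
  reflexivity.
Qed.

Theorem lemma11 (n : nat) (x y z : R) :
  sin ((x + y + 2 * z) / 2) <> 0 ->
  sin ((x + y - 2 * z) / 2) <> 0 ->
  sin ((x - y + 2 * z) / 2) <> 0 ->
  sin ((x - y - 2 * z) / 2) <> 0 ->
  Upsilon n x y z =
    cos ((x - y + (8 + 4 * INR n) * z) / 2) / (8 * sin ((x - y - 2 * z) / 2))
  - cos (((2 * INR n + 3) * (x - y) + 4 * z) / 2) / (8 * sin ((x - y - 2 * z) / 2))
  + cos (((2 * INR n + 3) * (x - y) - 4 * z) / 2) / (8 * sin ((x - y + 2 * z) / 2))
  - cos ((x - y - (8 + 4 * INR n) * z) / 2) / (8 * sin ((x - y + 2 * z) / 2))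
  + cos (((2 * INR n + 3) * (x + y) + 4 * z) / 2) / (8 * sin ((x + y - 2 * z) / 2))
  - cos ((x + y + (8 + 4 * INR n) * z) / 2) / (8 * sin ((x + y - 2 * z) / 2))
  + cos ((x + y - (8 + 4 * INR n) * z) / 2) / (8 * sin ((x + y + 2 * z) / 2))
  - cos (((2 * INR n + 3) * (x + y) - 4 * z) / 2) / (8 * sin ((x + y + 2 * z) / 2)).
Proof.
  intros Hsp Hsm Hdp Hdm.
  rewrite Upsilon_sin_pair_sum, !sin_pair_sum_closed by assumption.
  field. repeat split; assumption.
Qed.
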